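(* Let $a,b\in\mathrm{Act}$ with $a\neq b$. For every formula $\varphi$ of the one-variable, diamond-free fragment of $D\oplus_\subseteq K4$, $\varphi$ is satisfiable (at some state of some $D\oplus_\subseteq K4$ Kripke structure) if and only if $[\![\mathrm{trans}(\varphi)]\!]_L\neq\emptyset$.
   Context: $D\oplus_\subseteq K4$ Kripke structures are $M=(W,\xrightarrow{1},\xrightarrow{2},V)$ with $W$ nonempty, $\xrightarrow{1}$ serial ($\forall x\exists y.\,x\xrightarrow{1}y$), $\xrightarrow{2}$ transitive, $\xrightarrow{1}\subseteq\xrightarrow{2}$, and $V:W\to2^{\{p\}}$. Formulae of the one-variable diamond-free fragment: $\varphi::=p\mid\neg p\mid\varphi\vee\varphi\mid\varphi\wedge\varphi\mid[1]\varphi\mid[2]\varphi$, with $M,w\models p$ iff $p\in V(w)$, boolean connectives as usual, and $M,w\models[i]\varphi$ iff $M,w'\models\varphi$ for all $w'$ with $w\xrightarrow{i}w'$. recHML formulae over a finite action set $\mathrm{Act}$: $\varphi::=\mathrm{tt}\mid\mathrm{ff}\mid\varphi\vee\varphi\mid\varphi\wedge\varphi\mid\langle A\rangle\varphi\mid[A]\varphi\mid\min X.\varphi\mid\max X.\varphi\mid X$, with linear-time semantics over $\mathrm{Act}^\omega$: $[\![\mathrm{tt}]\!]_L=\mathrm{Act}^\omega$, $[\![\mathrm{ff}]\!]_L=\emptyset$, $\vee,\wedge$ union/intersection, $[\![\langle A\rangle\varphi,\sigma]\!]_L=\{ct\mid c\in A,t\in[\![\varphi,\sigma]\!]_L\}$,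 $[\![[A]\varphi,\sigma]\!]_L=\{t\mid\forall c\in A,\forall t'.\ t=ct'\Rightarrow t'\in[\![\varphi,\sigma]\!]_L\}$, $\min/\max$ as least/greatest fixpoints, $[\![X,\sigma]\!]_L=\sigma(X)$; singletons $\{c\}$ are written $c$. Translation: $\mathrm{trans}(\varphi)=\max X.(\langle a\rangle X\vee\langle b\rangle\langle a\rangle X)\wedge\varphi^t$, where $p^t=\langle b\rangle\mathrm{tt}$, $(\neg p)^t=[b]\mathrm{ff}$, $(\cdot)^t$ commutes with $\vee,\wedge$, $([1]\psi)^t=\max X.([b]X\wedge[a]\psi^t)$ and $([2]\psi)^t=\max X.([b]X\wedge[a]X\wedge[a]\psi^t)$ (with fresh variables $X$). *)

From mathcomp Require Import all_boot.
Set Implicit Arguments. Unset Strict Implicit. Unset Printing Implicit Defensive.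

Record kripke := Kripke {
  kW : Type;
  kR1 : kW -> kW -> Prop;
  kR2 : kW -> kW -> Prop;
  kV : kW -> bool;
  kR1_serial : forall x, exists y, kR1 x y;
  kR2_trans : forall x y z, kR2 x y -> kR2 y z -> kR2 x z;
  kR1_sub_R2 : forall x y, kR1 x y -> kR2 x y
}.
(* W nonempty is implied by the existence of the evaluation state below. *)

Inductive mform :=
| MP | MNotP
| MOr of mform & mform
| MAnd of mform & mform
| MBox1 of mform
| MBox2 of mform.

Fixpoint msat (M : kripke) (w : kW M) (f : mform) : Prop :=
  match f with
  | MP => kV w = true
  | MNotP => kV w = false
  | MOr f1 f2 => msat w f1 \/ msat w f2
  | MAnd f1 f2 => msat w f1 /\ msat w f2
  | MBox1 g => forall w', kR1 w w' -> msat w' g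
  | MBox2 g => forall w', kR2 w w' -> msat w' g
  end.

Definition msatisfiable (f : mform) : Prop :=
  exists (M : kripke) (w : kW M), msat w f.

Inductive hml (Act : finType) :=
| Htt | Hff
| HOr of hml Act & hml Act
| HAnd of hml Act & hml Act
| HDia of {set Act} & hml Act
| HBox of {set Act} & hml Act
| HMin of nat & hml Act
| HMax of nat & hml Act
| HVar of nat.
Arguments Htt {Act}. Arguments Hff {Act}. Arguments HVar {Act}.

Definition trace (Act : Type) := nat -> Act.
Definition ttail (Act : Type) (t : trace Act) : trace Act := fun n => t n.+1.

Definition env (Act : Type) := nat -> (trace Act -> Prop).
Definition upd (Act : Type) (s : env Act) (X : nat) (S : trace Act -> Prop) : env Act :=
  fun Y => if Y == X then S else s Y.

(* min/max are the least/greatest fixpoints, given by Knaster-Tarski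
   (intersection of pre-fixpoints / union of post-fixpoints). *)
Fixpoint hsem (Act : finType) (f : hml Act) (s : env Act) : trace Act -> Prop :=
  match f with
  | Htt => fun _ => True
  | Hff => fun _ => False
  | HOr f1 f2 => fun t => hsem f1 s t \/ hsem f2 s t
  | HAnd f1 f2 => fun t => hsem f1 s t /\ hsem f2 s t
  | HDia A g => fun t => t 0 \in A /\ hsem g s (ttail t)
  | HBox A g => fun t => t 0 \in A -> hsem g s (ttail t)
  | HMin X g => fun t => forall S : trace Act -> Prop,
       (forall u, hsem g (upd s X S) u -> S u) -> S t
  | HMax X g => fun t => exists S : trace Act -> Prop,
       (forall u, S u -> hsem g (upd s X S) u) /\ S t
  | HVar X => s X
  end.

Definition empty_env (Act : Type) : env Act := fun _ _ => False.

Fixpoint msize (f : mform) : nat :=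
  match f with
  | MP | MNotP => 1
  | MOr f1 f2 | MAnd f1 f2 => (msize f1 + msize f2).+1
  | MBox1 g | MBox2 g => (msize g).+1
  end.

(* Fresh variables: the binder for ([i]psi)^t is X_(msize ([i]psi)); all variables
   bound inside psi^t have strictly smaller indices, and all indices are >= 1. *)
Fixpoint transt (Act : finType) (a b : Act) (f : mform) : hml Act :=
  match f with
  | MP => HDia [set b] Htt
  | MNotP => HBox [set b] Hff
  | MOr f1 f2 => HOr (transt a b f1) (transt a b f2)
  | MAnd f1 f2 => HAnd (transt a b f1) (transt a b f2)
  | MBox1 g => let X := msize f in
      HMax X (HAnd (HBox [set b] (HVar X)) (HBox [set a] (transt a b g)))
  | MBox2 g => let X := msize f in
      HMax X (HAnd (HAnd (HBox [set b] (HVar X)) (HBox [set a] (HVar X)))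
                   (HBox [set a] (transt a b g)))
  end.

Definition trans (Act : finType) (a b : Act) (f : mform) : hml Act :=
  HAnd (HMax 0 (HOr (HDia [set a] (HVar 0)) (HDia [set b] (HDia [set a] (HVar 0)))))
       (transt a b f).

From Stdlib Require Import Relations ClassicalEpsilon FunctionalExtensionality.
From mathcomp Require Import all_boot.
Set Implicit Arguments. Unset Strict Implicit. Unset Printing Implicit Defensive.

(* A model of phi is unfolded along an R1-path w_0 w_1 ... into the trace that
   concatenates one block per state: "ba" where p holds and "a" where it does not.
   On such traces [1] reads "drop one block" and [2] "drop at least one block", so
   phi^t holds of the trace.  Conversely, the first conjunct of trans(phi) says that
   the trace is an infinite concatenation of such blocks, and since a <> b this
   decomposition is unique; the traces of a witnessing post-fixpoint, related by
   "drop the first block" and its transitive closure, then form a model of phi. *)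

Lemma upd_eq (Act : Type) (s : env Act) X S : upd s X S X = S.
Proof. by rewrite /upd eqxx. Qed.

Section BlockTraces.

Variables (Act : eqType) (a b : Act).

Definition block_closed (S : trace Act -> Prop) :=
  forall u, S u -> (u 0 = a /\ S (ttail u)) \/
                   (u 0 = b /\ ttail u 0 = a /\ S (ttail (ttail u))).

(* [block_trace p k] is the concatenation, over j >= k, of "ba" if [p j] and "a" otherwise. *)
Fixpoint block_trace (p : nat -> bool) (k n : nat) {struct n} : Act :=
  match n with
  | 0 => if p k then b else a
  | m.+1 => match m with
            | 0 => if p k then a else block_trace p k.+1 m
            | n'.+1 => if p k then block_trace p k.+1 n' else block_trace p k.+1 m
            end
  end.

Lemma block_trace_b (p : nat -> bool) k : p k ->
  [/\ block_trace p k 0 = b, ttail (block_trace p k) 0 = a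
    & ttail (ttail (block_trace p k)) = block_trace p k.+1].
Proof. by move=> pk; rewrite /ttail /= pk. Qed.

Lemma block_trace_a (p : nat -> bool) k : ~~ p k ->
  block_trace p k 0 = a /\ ttail (block_trace p k) = block_trace p k.+1.
Proof.
move=> /negbTE pk; rewrite /= pk; split=> //.
by apply: functional_extensionality => -[|n]; rewrite /ttail /= pk.
Qed.

Lemma block_trace_closed (p : nat -> bool) :
  block_closed (fun u => exists k, u = block_trace p k).
Proof.
move=> _ [k ->]; case pk: (p k).
- by have [-> -> ->] := block_trace_b pk; right; do 2 split=> //; exists k.+1.
- by have [-> ->] := block_trace_a (negbT pk); left; split=> //; exists k.+1.
Qed.

Definition block_suffix (p : nat -> bool) k (u : trace Act) :=
  u = block_trace p k \/ (p k /\ u = ttail (block_trace p k)).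

Hypothesis hab : a != b.

Lemma block_suffix_b (p : nat -> bool) k u :
  block_suffix p k u -> u 0 = b -> block_suffix p k (ttail u).
Proof.
case=> [->|[pk ->]] u0.
- case pk: (p k); first by right.
  by have [ua _] := block_trace_a (negbT pk); move: hab; rewrite -u0 ua eqxx.
- by have [_ ua _] := block_trace_b pk; move: hab; rewrite -u0 ua eqxx.
Qed.

Lemma block_suffix_a (p : nat -> bool) k u :
  block_suffix p k u -> u 0 = a -> ttail u = block_trace p k.+1.
Proof.
case=> [->|[pk ->]] u0; last by have [_ _ ->] := block_trace_b pk.
case pk: (p k); last by have [_ ->] := block_trace_a (negbT pk).
by have [ub _ _] := block_trace_b pk; move: hab; rewrite -ub u0 eqxx.
Qed.

End BlockTraces.

Section BlockKripke.

Variables (Act : eqType) (a b : Act) (S0 : trace Act -> Prop).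
Hypothesis S0_closed : block_closed a b S0.

Definition block_step (x y : {u | S0 u}) : Prop :=
  (sval x 0 = a /\ sval y = ttail (sval x)) \/
  (sval x 0 = b /\ sval y = ttail (ttail (sval x))).

Lemma block_step_serial x : exists y, block_step x y.
Proof.
case: x => u Su; case: (S0_closed Su) => [[u0 Stu]|[u0 [_ Sttu]]].
- by exists (exist _ _ Stu); left.
- by exists (exist _ _ Sttu); right.
Qed.

Definition block_kripke : kripke :=
  {| kW := {u | S0 u};
     kR1 := block_step;
     kR2 := clos_trans _ block_step;
     kV := fun x => sval x 0 == b;
     kR1_serial := block_step_serial;
     kR2_trans := t_trans _ _;
     kR1_sub_R2 := t_step _ _ |}.

Hypothesis hab : a != b.

(* [S] plays the role of the fixpoint variable of [([i]psi)^t], [T] that of [psi^t]. *)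
Lemma block_step_box (S T : trace Act -> Prop) x y :
  (forall u, S u -> u 0 = b -> S (ttail u)) ->
  (forall u, S u -> u 0 = a -> T (ttail u)) ->
  S (sval x) -> block_step x y -> T (sval y).
Proof.
move=> Sb Ta; case: x => u Su /= Su' [] [/= u0 ->]; first exact: Ta.
apply: Ta; first exact: Sb.
by case: (S0_closed Su) => [[ua _]|[_ []]] //; move: hab; rewrite -ua u0 eqxx.
Qed.

End BlockKripke.

Lemma serial_path (M : kripke) (w0 : kW M) :
  exists w : nat -> kW M, w 0 = w0 /\ forall n, kR1 (w n) (w n.+1).
Proof.
pose next (x : kW M) := proj1_sig (constructive_indefinite_description _ (kR1_serial x)).
exists (fun n => iter n next w0); split=> // n.
exact: proj2_sig (constructive_indefinite_description _ (kR1_serial _)).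
Qed.

Lemma kR2_path (M : kripke) (w : nat -> kW M) :
  (forall n, kR1 (w n) (w n.+1)) -> forall k m, k < m -> kR2 (w k) (w m).
Proof.
move=> Hw k; elim=> // m IH; rewrite ltnS leq_eqVlt => /orP[/eqP ->|km].
  exact: kR1_sub_R2.
exact: kR2_trans (IH km) (kR1_sub_R2 (Hw m)).
Qed.

Section Translation.

Variables (Act : finType) (a b : Act).
Hypothesis hab : a != b.

Lemma hsem_trans phi s t :
  hsem (trans a b phi) s t <->
  (exists2 S, block_closed a b S & S t) /\ hsem (transt a b phi) s t.
Proof.
split=> -[[S]].
- case=> HS St Ht; split=> //; exists S => // u /HS; rewrite upd_eq.
  by case=> [[/set1P u0 Stu]|[/set1P u0 [/set1P ua Sttu]]]; [left|right].
- move=> HS St Ht; split=> //; exists S; split=> // u /HS /=; rewrite upd_eq.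
  case=> [[u0 Stu]|[u0 [ua Sttu]]]; [left|right]; rewrite ?in_set1 ?u0 ?ua ?eqxx //.
Qed.

Lemma transt_sound S0 (S0_closed : block_closed a b S0) phi :
  forall s (v : {u | S0 u}),
  hsem (transt a b phi) s (sval v) -> msat (M := block_kripke S0_closed) v phi.
Proof.
elim: phi => [||f1 IH1 f2 IH2|f1 IH1 f2 IH2|f IH|f IH] s v /=.
- by case=> /set1P/eqP.
- by rewrite in_set1 => /negP/negbTE.
- by case=> h; [left; apply: IH1 h|right; apply: IH2 h].
- by case=> h1 h2; split; [apply: IH1 h1|apply: IH2 h2].
- case=> S [HS Sv] y vy; apply: IH.
  apply: (block_step_box S0_closed hab _ _ Sv vy) => u /HS[Sb Ta] /set1P u0.
  + by rewrite upd_eq in Sb; apply: Sb.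
  + exact: Ta.
- case=> S [HS Sv] y vy; rewrite !upd_eq in HS.
  have step (T : trace Act -> Prop) (x z : {u | S0 u}) :
      (forall u, S u -> u 0 = a -> T (ttail u)) ->
      S (sval x) -> block_step a b x z -> T (sval z).
    apply: block_step_box => // u /HS[[Sb _] _] /set1P; exact: Sb.
  suff inv : forall x z, clos_trans _ (block_step (S0 := S0) a b) x z ->
      S (sval x) -> S (sval z) /\ hsem (transt a b f) (upd s (msize f).+1 S) (sval z).
    by apply: (IH (upd s (msize f).+1 S)); case: (inv _ _ vy Sv).
  move=> x z; elim=> {x z} [x z xz Sx|x y' z _ IHxy _ IHyz Sx].
  + split; apply: (step _ x) => // u /HS[[_ Sa] Ta] /set1P; [exact: Sa|exact: Ta].
  + by apply: IHyz; case: (IHxy Sx).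
Qed.

Lemma transt_complete (M : kripke) (w : nat -> kW M)
    (Hw : forall n, kR1 (w n) (w n.+1)) phi :
  forall k s, msat (w k) phi ->
  hsem (transt a b phi) s (block_trace a b (fun j => kV (w j)) k).
Proof.
set p := fun j => kV (w j).
elim: phi => [||f1 IH1 f2 IH2|f1 IH1 f2 IH2|f IH|f IH] k s /=.
- by rewrite /p => ->; rewrite in_set1 eqxx.
- by rewrite /p => -> /set1P ab; move: hab; rewrite ab eqxx.
- by case=> h; [left; apply: IH1 h|right; apply: IH2 h].
- by case=> h1 h2; split; [apply: IH1 h1|apply: IH2 h2].
- move=> Hf; exists (block_suffix a b p k); split; last by left.
  move=> u Su; rewrite upd_eq; split=> /set1P u0.
  + exact: block_suffix_b Su u0.
  + by rewrite (block_suffix_a hab Su u0); apply/IH/Hf/Hw.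
- move=> Hf; exists (fun u => exists2 j, k <= j & block_suffix a b p j u).
  split; last by exists k => //; left.
  move=> u [j kj Su]; rewrite !upd_eq.
  have next : u 0 = a -> ttail u = block_trace a b p j.+1 := block_suffix_a hab Su.
  split; first split=> /set1P u0.
  + by exists j => //; apply: block_suffix_b Su u0.
  + by exists j.+1; [exact: leqW|left; exact: next].
  + by move=> /set1P /next ->; apply/IH/Hf/kR2_path.
Qed.

End Translation.

Theorem mainTheorem19 (Act : finType) (a b : Act) (hab : a != b) (phi : mform) :
  msatisfiable phi <-> (exists t : trace Act, hsem (trans a b phi) (@empty_env Act) t).
Proof.
split.
- case=> M [w0 Hw0]; have [w [w_0 Hw]] := serial_path w0.
  exists (block_trace a b (fun j => kV (w j)) 0); apply/hsem_trans; split.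
  + by exists (fun u => exists k, u = block_trace a b (fun j => kV (w j)) k);
      [exact: block_trace_closed|exists 0].
  + by apply: transt_complete; rewrite // w_0.
- case=> t /hsem_trans[[S0 S0_closed St] Ht].
  exists (block_kripke S0_closed), (exist _ t St).
  exact: (transt_sound hab S0_closed (v := exist _ t St) Ht).
Qed.
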